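(* Let $k \ge 2$ and $v$ be integers with $v \equiv 1 \pmod{k-1}$ and $v \ge k(k-1)^2 + k$. Then \[ \beta(1,v,k) = \frac{v-1}{k-1}. \]
   Context: For integers $v \ge k \ge 2$, a $(v,k)$-packing is a pair $(X,\mathcal{B})$ where $X$ is a set of $v$ points and $\mathcal{B}$ is a set of $k$-subsets of $X$ (blocks) such that every pair of distinct points lies in at most one block. A partial parallel class (PPC) is a set of pairwise disjoint blocks; its size is the number of blocks. A PPC of size $\rho$ is maximum if the packing has no PPC of size $\rho+1$. $\beta(\rho,v,k)$ denotes the maximum number of blocks in a $(v,k)$-packing in which the maximum PPC has size $\rho$; thus $\beta(1,v,k)$ is the maximum number of blocks in a $(v,k)$-packing with no two disjoint blocks. *)

From mathcomp Require Import all_boot.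
Set Implicit Arguments. Unset Strict Implicit. Unset Printing Implicit Defensive.

Definition packing (v k : nat) (B : {set {set 'I_v}}) : bool :=
  [forall b in B, #|b| == k] &&
  [forall x : 'I_v, forall y : 'I_v,
     (x != y) ==> (#|[set b in B | (x \in b) && (y \in b)]| <= 1)].

Definition ppc (v : nat) (B P : {set {set 'I_v}}) : bool :=
  (P \subset B) &&
  [forall b1 in P, forall b2 in P, (b1 != b2) ==> [disjoint b1 & b2]].

Definition has_ppc_of_size (v : nat) (B : {set {set 'I_v}}) (r : nat) : bool :=
  [exists P : {set {set 'I_v}}, ppc B P && (#|P| == r)].

Definition max_ppc_size (v : nat) (B : {set {set 'I_v}}) (rho : nat) : bool :=
  has_ppc_of_size B rho && ~~ has_ppc_of_size B rho.+1.

Definition beta (rho v k : nat) : nat :=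
  \max_(B : {set {set 'I_v}} | packing k B && max_ppc_size B rho) #|B|.

From mathcomp Require Import all_boot zify.
Set Implicit Arguments. Unset Strict Implicit. Unset Printing Implicit Defensive.

(* Having no two disjoint blocks means being an intersecting family.  If all
   blocks of an intersecting (v,k)-packing pass through a point x, they are
   otherwise pairwise disjoint, so there are at most (v-1)/(k-1) of them.
   Otherwise every point p lies on at most k blocks (the blocks through p meet
   a block avoiding p in distinct points), and counting the incidences with a
   fixed block gives at most k(k-1)+1 blocks, which the bound on v makes at
   most (v-1)/(k-1).  Conversely, (v-1)/(k-1) disjoint (k-1)-sets avoiding a
   point x, each completed by x, form such a packing. *)

Definition intersecting (T : finType) (B : {set {set T}}) : Prop :=
  {in B &, forall b1 b2 : {set T}, b1 != b2 -> ~~ [disjoint b1 & b2]}.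

Lemma sum_pred_card (T : finType) (D : {set T}) (Q : pred T) :
  \sum_(t in D) (Q t : nat) = #|[set t in D | Q t]|.
Proof.
rewrite (eq_bigr (fun t => if Q t then 1 else 0)); last by move=> t _; case: (Q t).
by rewrite -big_mkcondr sum1dep_card.
Qed.

Lemma incidence_count (T : finType) (B : {set {set T}}) (A : {set T}) :
  \sum_(b in B) #|b :&: A| = \sum_(p in A) #|[set b in B | p \in b]|.
Proof.
have meetE b : #|b :&: A| = \sum_(p in A) (p \in b : nat).
  by rewrite sum_pred_card; apply: eq_card => p; rewrite !inE andbC.
rewrite (eq_bigr _ (fun b _ => meetE b)).
by rewrite exchange_big; apply: eq_bigr => p _; rewrite sum_pred_card.
Qed.

Lemma disjoint_subsets_exist (T : finType) (A : {set T}) m d :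
  0 < d -> m * d <= #|A| ->
  exists P : {set {set T}},
    [/\ #|P| = m, trivIset P & {in P, forall S : {set T}, #|S| = d /\ S \subset A}].
Proof.
move=> d_gt0; elim: m A => [|m IHm] A le_mdA.
  exists set0; rewrite cards0; split=> // [|S]; last by rewrite inE.
  by apply/trivIsetP => ? ?; rewrite inE.
have /card_geqP[s [s_uniq s_size sA]] : d <= #|A|.
  by apply: leq_trans le_mdA; rewrite mulSn leq_addr.
pose S := [set t in s].
have cardS : #|S| = d by rewrite cardsE -s_size; apply/card_uniqP.
have SA : S \subset A by apply/subsetP => t; rewrite inE => /sA.
have [|P [cardP triP PA]] := IHm (A :\: S).
  by rewrite cardsD (setIidPr SA) cardS; rewrite mulSn in le_mdA; lia.
have [triSP SnotinP] : trivIset (S |: P) /\ S \notin P.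
  apply: trivIsetU1 _ triP _ => [S' /PA[_ S'AS]|].
    rewrite disjoint_sym disjoint_subset; apply: subset_trans S'AS _.
    by apply/subsetP => t; rewrite !inE => /andP[].
  by apply/negP => /PA[]; rewrite cards0 => d0; move: d_gt0; rewrite -d0.
exists (S |: P); split=> //; first by rewrite cardsU1 SnotinP cardP.
move=> S' /setU1P[-> //|/PA[cardS' S'AS]]; split=> //.
exact: subset_trans S'AS (subsetDl _ _).
Qed.

Section IntersectingPackings.
Variable v : nat.
Implicit Types (B P : {set {set 'I_v}}) (b c S : {set 'I_v}) (p q x : 'I_v).

Lemma packingP k B :
  reflect ({in B, forall b, #|b| = k} /\
           forall p q, p != q -> #|[set b in B | (p \in b) && (q \in b)]| <= 1)
          (packing k B).
Proof.
apply: (iffP andP) => [[/forall_inP cardB /forallP pairB]|[cardB pairB]].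
  split=> [b /cardB /eqP //|p q]; exact: implyP (forallP (pairB p) q).
split; first by apply/forall_inP => b /cardB ->.
by apply/forallP => p; apply/forallP => q; apply/implyP/pairB.
Qed.

Lemma ppc_pair B b1 b2 : b1 \in B -> b2 \in B -> b1 != b2 ->
  ppc B [set b1; b2] = [disjoint b1 & b2].
Proof.
move=> b1B b2B b12; rewrite /ppc subUset !sub1set b1B b2B /=.
apply/forall_inP/idP => [/(_ b1 (set21 _ _)) /forall_inP /(_ b2 (set22 _ _))|dis12].
  by rewrite b12.
move=> c1 c1b; apply/forall_inP => c2 c2b; apply/implyP => c12.
by case/set2P: c1b c2b c12 => -> /set2P[] ->; rewrite ?eqxx // disjoint_sym.
Qed.

Lemma max_ppc1P B : reflect (B != set0 /\ intersecting B) (max_ppc_size B 1).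
Proof.
have ppc1E : has_ppc_of_size B 1 = (B != set0).
  apply/existsP/set0Pn => [[P /andP[/andP[PB _] /cards1P[b Pb]]]|[b bB]].
    by exists b; apply: (subsetP PB); rewrite Pb set11.
  exists [set b]; rewrite cards1 eqxx andbT /ppc sub1set bB /=.
  by apply/forall_inP => ? /set1P->; apply/forall_inP => ? /set1P->; rewrite eqxx.
rewrite /max_ppc_size ppc1E; apply: (iffP andP) => -[-> no_ppc2]; split=> //.
  move=> b1 b2 b1B b2B b12; apply: contra no_ppc2 => dis12.
  by apply/existsP; exists [set b1; b2]; rewrite ppc_pair // dis12 cards2 b12.
apply/existsP => -[P /andP[ppcP /cards2P[b1 [b2 [b12 Pb]]]]].
have /andP[PB _] := ppcP; rewrite Pb subUset !sub1set in PB ppcP.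
case/andP: PB => b1B b2B.
by move: ppcP; rewrite ppc_pair //; apply/negP/no_ppc2.
Qed.

Lemma packing_codegree k B p q : packing k B -> p != q ->
  #|[set b in B | (p \in b) && (q \in b)]| <= 1.
Proof. by case/packingP=> _; apply. Qed.

Lemma star_card_bound d B x : packing d.+1 B -> {in B, forall b, x \in b} ->
  #|B| * d <= v.-1.
Proof.
move=> packB xB; have [cardB _] := packingP _ _ packB.
have -> : #|B| * d = \sum_(b in B) #|b :&: [set~ x]|.
  rewrite -sum_nat_const; apply: eq_bigr => b bB.
  apply/eqP; rewrite -eqSS -(cardB b bB) (cardsD1 x b) xB // add1n eqSS.
  by rewrite setDE.
rewrite incidence_count -[in X in _ <= X.-1](card_ord v) -(cardsC1 x) -sum1_card.
apply: leq_sum => p; rewrite !inE => px.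
apply: leq_trans (packing_codegree packB px); apply: subset_leq_card.
by apply/subsetP => b; rewrite !inE => /andP[bB ->]; rewrite bB xB.
Qed.

Lemma intersecting_meet B b c : intersecting B -> b \in B -> c \in B ->
  b != c -> 0 < #|b :&: c|.
Proof. by move=> interB bB cB bc; rewrite card_gt0 setI_eq0 interB. Qed.

Lemma intersecting_degree_bound k B c p : packing k B -> intersecting B ->
  c \in B -> p \notin c -> #|[set b in B | p \in b]| <= k.
Proof.
move=> packB interB cB pc; have [cardB _] := packingP _ _ packB.
apply: (@leq_trans (\sum_(b in [set b in B | p \in b]) #|b :&: c|)).
  rewrite -sum1_card; apply: leq_sum => b; rewrite inE => /andP[bB pb].
  by apply: (intersecting_meet interB bB cB); apply: contraNneq pc => <-.
rewrite incidence_count -(cardB c cB) -sum1_card; apply: leq_sum => q qc.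
have pq : p != q by apply: contraNneq pc => ->.
apply: leq_trans (packing_codegree packB pq); apply: subset_leq_card.
by apply/subsetP => b; rewrite !inE andbA.
Qed.

Lemma nonstar_card_bound d B : packing d.+1 B -> intersecting B ->
  (forall x, exists2 c, c \in B & x \notin c) -> #|B| <= d.+1 * d + 1.
Proof.
move=> packB interB nonstar; have [cardB _] := packingP _ _ packB.
have [->|[b0 b0B]] := set_0Vmem B; first by rewrite cards0.
have lower : #|B| + d <= \sum_(b in B) #|b :&: b0|.
  rewrite -sum1_card !(bigD1 b0 b0B) /= setIid cardB // addnAC add1n leq_add2l.
  apply: leq_sum => b /andP[bB bb0]; exact: intersecting_meet interB bB b0B bb0.
have upper : \sum_(b in B) #|b :&: b0| <= d.+1 * d.+1.
  rewrite incidence_count -{1}(cardB b0 b0B) -sum_nat_const.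
  apply: leq_sum => p _; have [c cB pc] := nonstar p.
  exact: intersecting_degree_bound packB interB cB pc.
have := leq_trans lower upper; rewrite mulnS; lia.
Qed.

Lemma intersecting_packing_card d B : 0 < d -> packing d.+1 B -> intersecting B ->
  #|B| <= maxn (v.-1 %/ d) (d.+1 * d + 1).
Proof.
move=> d_gt0 packB interB; rewrite leq_max.
have [x /forall_inP xB|nonstar] := pickP [pred x | [forall b in B, x \in b]].
  by rewrite leq_divRL // (star_card_bound packB xB).
rewrite nonstar_card_bound ?orbT // => x.
by have /forall_inPn[c cB xc] := negbT (nonstar x); exists c.
Qed.

Lemma star_packing d x P : trivIset P ->
  {in P, forall S, #|S| = d /\ x \notin S} -> packing d.+1 [set x |: S | S in P].
Proof.
move=> triP PS; apply/packingP; split.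
  by move=> _ /imsetP[S /PS[cardS xS] ->]; rewrite cardsU1 xS cardS.
move=> p q pq; apply/card_le1_eqP => b b'.
rewrite !inE => /andP[/imsetP[S SP ->] /andP[pS qS]].
move=> /andP[/imsetP[S' S'P ->] /andP[pS' qS']].
have in_S T w : w != x -> w \in x |: T -> w \in T.
  by move=> wx; rewrite in_setU1 (negbTE wx).
have [w wS wS'] : exists2 w, w \in S & w \in S'.
  have [px|px] := eqVneq p x; last by exists p; apply: in_S.
  by exists q; apply: in_S; rewrite // -px eq_sym.
have [-> //|SS'] := eqVneq S S'.
by move: wS'; rewrite (disjointFr (trivIsetP triP S S' SP S'P SS') wS).
Qed.

Lemma card_star x P : {in P, forall S, x \notin S} -> #|[set x |: S | S in P]| = #|P|.
Proof.
move=> xP; apply: card_in_imset => S S' SP S'P eqS.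
by rewrite -(setU1K (xP S SP)) eqS setU1K ?xP.
Qed.

Lemma max_ppc1_star x B : B != set0 -> {in B, forall b, x \in b} -> max_ppc_size B 1.
Proof.
move=> B_neq0 xB; apply/max_ppc1P; split=> // b1 b2 b1B b2B _.
by apply/negP => /disjointFr/(_ (xB b1 b1B)); rewrite xB.
Qed.

Lemma star_packing_exists d m x : 0 < d -> m * d <= v.-1 ->
  exists B, [/\ packing d.+1 B, {in B, forall b, x \in b} & #|B| = m].
Proof.
move=> d_gt0; rewrite -[in X in _ <= X.-1](card_ord v) -(cardsC1 x) => le_mdv.
have [P [cardP triP PS]] := disjoint_subsets_exist d_gt0 le_mdv.
have xP S : S \in P -> #|S| = d /\ x \notin S.
  by case/PS => cardS /subsetP SCx; split=> //; apply/negP => /SCx; rewrite !inE eqxx.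
exists [set x |: S | S in P]; split; first exact: star_packing.
  by move=> _ /imsetP[S _ ->]; rewrite setU11.
by rewrite card_star // => S /xP[].
Qed.

End IntersectingPackings.

Theorem theorem5p5 (k v : nat) :
  2 <= k ->
  v = 1 %[mod k - 1] ->
  k * (k - 1) ^ 2 + k <= v ->
  beta 1 v k = (v - 1) %/ (k - 1).
Proof.
case: k => [//|d]; rewrite ltnS !subn1 /= => d_gt0 _ v_ge.
have v_gt0 : 0 < v by apply: leq_trans v_ge; rewrite addnS.
have m_ge : d.+1 * d + 1 <= v.-1 %/ d.
  by rewrite leq_divRL //; rewrite expnS expn1 in v_ge; lia.
apply/eqP; rewrite eqn_leq; apply/andP; split.
  apply/bigmax_leqP => B /andP[packB /max_ppc1P[_ interB]].
  by rewrite -(maxn_idPl m_ge) intersecting_packing_card.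
have [B [packB xB cardB]] :=
  star_packing_exists (Ordinal v_gt0) d_gt0 (leq_divM v.-1 d).
rewrite -cardB; apply: leq_bigmax_cond; rewrite packB (max_ppc1_star _ xB) //.
by rewrite -card_gt0 cardB; apply: leq_trans m_ge; rewrite addn1.
Qed.
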